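(* (i) For any $x\in\mathcal A$, the process $\{x^{-1}W_n\}_{n\ge0}$ under $P_x$ has the same distribution as the process $\{W_n\}_{n\ge0}$ under $P_{e_{\mathfrak t(x)}}$. (ii) For two words $w_1\neq w_2$ in $\mathcal A$, there is a positive-probability path of the Markov chain $\{W_n\}$ between $w_1$ and $w_2$ if and only if $w_1,w_2\in\mathcal A_i$ for some $1\le i\le N$. (iii) Suppose $\{v_n\}_{1\le n\le n'}$ is a positive-probability path of the chain with $v_1=w_1$ and $v_{n'}=w_2$, $w_1\neq w_2$, and let $w_1^{-1}w_2=\prod_{\ell=1}^d A_{i_\ell,j_\ell}^{(k_\ell)}$, $d\ge1$, be the reduced representation. Then there exist times $1<n_1<n_2<\dots<n_{d-1}<n'$ such that $v_{n_m}=w_1\prod_{\ell=1}^m A_{i_\ell,j_\ell}^{(k_\ell)}$ for each $1\le m\le d-1$.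
   Context: Fix an integer $N\ge 3$. Let $\mathcal G_N$ be the groupoid with object set $\{1,\dots,N\}$ generated by arrows $A_{i,j}^{(k)}$, $i\neq j\in\{1,\dots,N\}$, $k\in\{-1,1\}$, with source $\mathfrak s(A_{i,j}^{(k)})=i$ and target $\mathfrak t(A_{i,j}^{(k)})=j$, subject to the relations $A_{i,j}^{(k)}A_{j,\ell}^{(k)}=A_{i,\ell}^{(k)}$ for all $i,j,\ell$, $k$, with the convention $A_{i,i}^{(k)}:=e_i$ (the unit at object $i$). Composition $fg$ is defined when $\mathfrak t(f)=\mathfrak s(g)$, with source $\mathfrak s(f)$ and target $\mathfrak t(g)$. Let $\mathcal A$ be the arrow set and $\mathcal A_i=\{w\in\mathcal A:\mathfrak s(w)=i\}$. Every arrow has a unique reduced representation (a composition of generators to which the relations cannot be applied to decrease the number of generators), which is either empty ($e_i$) or of the form $A_{i_1,i_2}^{(k)}A_{i_2,i_3}^{(-k)}\cdots A_{i_d,i_{d+1}}^{((-1)^{d+1}k)}$ with $d\ge1$, $i_\ell\ne i_{\ell+1}$. Let $\{W_n\}_{n\ge0}$ be a Markov chain on $\mathcal A$ with $P(W_{n+1}=y\mid W_n=x)=p_{i,j}^{(k)}$ if $x^{-1}y=A_{i,j}^{(k)}$ with $i\neq j$, and $0$ otherwise, where $p_{i,j}^{(k)}\in(0,1)$ for all $i\ne j$, $k\in\{-1,1\}$, and $\sum_{j\neq i}\sum_{k=\pm1}p_{i,j}^{(k)}=1$ for each $i$. $P_x$ denotes the law of the chain started from $W_0=x$. A positive-probability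 path is a finite sequence of arrows in which each consecutive transition has positive probability. *)

From mathcomp Require Import all_boot all_order all_algebra.
Set Implicit Arguments. Unset Strict Implicit. Unset Printing Implicit Defensive.
Import Order.TTheory GRing.Theory Num.Theory.

(* The groupoid G_N, modelled by reduced representations (normal forms).
   Objects 1..N are represented by 'I_N.
   A generator A_{i,j}^{(k)} is the triple (i, j, k) with k : bool,
   true standing for k = 1 and false for k = -1.  *)

Section Groupoid.
Variable N : nat.

Definition gen := ('I_N * 'I_N * bool)%type.
Definition gsrc (g : gen) : 'I_N := g.1.1.
Definition gtgt (g : gen) : 'I_N := g.1.2.
Definition gkind (g : gen) : bool := g.2.
Definition is_gen (g : gen) : bool := gsrc g != gtgt g.

(* An arrow is given by its source and its reduced representation
   (a list of generators). *)
Definition arrow := ('I_N * seq gen)%type.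

Fixpoint red_from (c : 'I_N) (pk : option bool) (w : seq gen) : bool :=
  match w with
  | [::] => true
  | g :: t => [&& gsrc g == c, is_gen g,
                 (if pk is Some k then gkind g != k else true)
               & red_from (gtgt g) (Some (gkind g)) t]
  end.

Definition is_arrow (x : arrow) : bool := red_from x.1 None x.2.

Definition asrc (x : arrow) : 'I_N := x.1.
Definition atgt (x : arrow) : 'I_N := last x.1 (map gtgt x.2).

Definition unit_arrow (i : 'I_N) : arrow := (i, [::]).

Definition gen_arrow (g : gen) : arrow := (gsrc g, [:: g]).

(* append a generator to a reduced word stored in reverse order,
   applying the relations A^{(k)}_{i,j} A^{(k)}_{j,l} = A^{(k)}_{i,l}
   and A^{(k)}_{i,i} = e_i *)
Definition push (st : seq gen) (g : gen) : seq gen :=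
  match st with
  | h :: t => if gkind h == gkind g then
                (if gsrc h == gtgt g then t else (gsrc h, gtgt g, gkind g) :: t)
              else g :: st
  | [::] => [:: g]
  end.

(* composition fg (defined when t(f) = s(g); junk value f otherwise) *)
Definition acomp (x y : arrow) : arrow :=
  if atgt x == asrc y then (x.1, rev (foldl push (rev x.2) y.2)) else x.

(* inverse arrow: (A_{i,j}^{(k)})^{-1} = A_{j,i}^{(k)} *)
Definition ainv (x : arrow) : arrow :=
  (atgt x, rev (map (fun g : gen => (gtgt g, gsrc g, gkind g)) x.2)).

Section Chain.
Variable R : realFieldType.
Variable p : gen -> R.
Local Open Scope ring_scope.

Definition trans (x y : arrow) : R :=
  if asrc x == asrc y then
    (if (acomp (ainv x) y).2 is [:: g] then p g else 0)
  else 0.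

Fixpoint weight (x : arrow) (ys : seq arrow) : R :=
  match ys with
  | [::] => 1
  | y :: t => trans x y * weight y t
  end.

Definition step_cands (x : arrow) : seq arrow :=
  [seq acomp x (gen_arrow g) | g <- enum {: gen} & (gsrc g == atgt x) && is_gen g].

(* all candidate trajectories (W_0, ..., W_n) with W_0 = x (a finite
   superset of the support of the law of (W_0,...,W_n) under P_x) *)
Fixpoint cand_paths (n : nat) (x : arrow) : seq (seq arrow) :=
  match n with
  | 0 => [:: [:: x]]
  | n'.+1 => [seq x :: ys | y <- step_cands x, ys <- cand_paths n' y]
  end.

(* P_x((W_0, ..., W_n) \in B) *)
Definition prob_fdd (n : nat) (x : arrow) (B : pred (seq arrow)) : R :=
  \sum_(ys <- undup (cand_paths n x) | B ys) weight x (behead ys).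

Definition pos_path (v : seq arrow) : bool :=
  all is_arrow v &&
  (if v is a :: t then path (fun a b => 0 < trans a b) a t else false).

End Chain.
End Groupoid.

From Pilot Require Import Defs.
From mathcomp Require Import all_boot all_order all_algebra.
From mathcomp Require Import zify.
Set Implicit Arguments. Unset Strict Implicit. Unset Printing Implicit Defensive.
Import Order.TTheory GRing.Theory Num.Theory.

(* Arrows are stored through their reduced words, on which right multiplication
   by a generator acts (on the reversed word) by [push]; this action is
   associative on reduced words.  Consequently the reduced word of x^-1 y,
   [ldiv x y], is invariant under left translation of both arguments, so
   y |-> x^-1 y maps the arrows with source s(x) bijectively onto those with
   source t(x) and preserves transition probabilities, which gives (i).  A step
   of the chain keeps the source and multiplies by one generator, and a reduced
   word can be built and unbuilt one letter at a time, which gives (ii).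
   Relative to w1 a step changes only the last letter of the reduced word
   (it appends, deletes or replaces it), so the arrows whose relative word
   extends a prefix u can only be entered at the arrow with relative word u.
   Hence after its last visit to w1 A_1 ... A_m the path still has to pass
   through w1 A_1 ... A_(m+1), and these last visits are the times of (iii). *)

Section SeqFacts.
Variable T : eqType.

(* 1-based position of the last occurrence of [x] in [s]; [0] if there is none. *)
Definition last_pos (x : T) (s : seq T) : nat := size s - index x (rev s).

Lemma last_posP x0 x s : x \in s ->
  0 < last_pos x s <= size s /\ nth x0 s (last_pos x s).-1 = x.
Proof.
move=> xs; have lt_i : index x (rev s) < size s by rewrite -size_rev index_mem mem_rev.
split; first by rewrite /last_pos; lia.
have -> : (last_pos x s).-1 = size s - (index x (rev s)).+1 by rewrite /last_pos; lia.
by rewrite -nth_rev ?nth_index ?mem_rev.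
Qed.

Lemma last_pos_drop x s i : x \in drop i s -> i < last_pos x s.
Proof.
move=> x_drop; have lt_i := x_drop; rewrite -mem_rev -index_mem size_rev size_drop in lt_i.
rewrite /last_pos -[s](cat_take_drop i) rev_cat index_cat mem_rev x_drop size_cat size_drop.
by rewrite size_takel; lia.
Qed.

Lemma suffix_consE (s u : seq T) x : suffix s (x :: u) = (s == x :: u) || suffix s u.
Proof.
apply/suffixP/orP => [[[|y r] /= E]|[/eqP ->|/suffixP [r ->]]].
- by left; rewrite E.
- by right; case: E => _ ->; apply: suffix_suffix.
- by exists [::].
- by exists (x :: r).
Qed.

Lemma undup_map_in (T' : eqType) (f : T -> T') s :
  {in s &, injective f} -> undup (map f s) = map f (undup s).
Proof.
elim: s => [|x s IH] //= f_inj.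
have f_inj' : {in s &, injective f} by move=> a b a_s b_s; apply: f_inj; rewrite inE ?a_s ?b_s orbT.
have -> : (f x \in map f s) = (x \in s).
  apply/mapP/idP => [[y ys /f_inj ->]|xs]; rewrite ?inE ?eqxx ?ys ?orbT //.
  by exists x.
by case: ifP => _; rewrite IH.
Qed.

Variable e : rel T.

Lemma path_drop x s i : i <= size s -> path e x s ->
  path e (nth x (x :: s) i) (drop i s) /\ last (nth x (x :: s) i) (drop i s) = last x s.
Proof.
elim: s x i => [|y s IH] x [|i] //= lt_i /andP [_ e_s].
by rewrite (set_nth_default y x) ?ltnS //; apply: IH.
Qed.

Lemma path_entry_mem (Q P : pred T) u :
  {in Q &, forall a b, e a b -> ~~ P a -> P b -> b = u} ->
  forall x s, all Q (x :: s) -> path e x s -> ~~ P x -> P (last x s) -> u \in s.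
Proof.
move=> entry x s; elim: s x => [|y s IH] x /=; first by move=> _ _ /negPf ->.
case/and3P=> Qx Qy Qs /andP [exy e_s] Px.
have [Py|Py] := boolP (P y); first by rewrite (entry x y) ?inE ?eqxx.
by move=> Pl; rewrite inE (IH y) ?orbT //= Qy.
Qed.

End SeqFacts.

Lemma path_ltn_map_iota (f : nat -> nat) a b k n :
  a <= f k -> f (k + n).+1 <= b -> (forall j, k <= j <= k + n -> f j < f j.+1) ->
  path ltn a (rcons (map f (iota k.+1 n)) b).
Proof.
elim: n a k => [|n IH] a k le_a le_b f_incr /=.
  rewrite addn0 in le_b f_incr; have := f_incr k; rewrite leqnn andbT; lia.
have lt_k := f_incr k; rewrite leqnn leq_addr /= in lt_k.
rewrite (leq_ltn_trans le_a (lt_k isT)) /=.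
apply: IH => //; first by rewrite addSnnS.
by move=> j /andP [le_kj le_jn]; apply: f_incr; lia.
Qed.

Section Words.
Variable N : nat.
Local Notation gen := (gen N).
Local Notation push := (@Defs.push N).

(* A stack is a word read backwards, the form in which [push] consumes it. *)
Definition stack_tgt (c : 'I_N) (st : seq gen) : 'I_N := head c (map (@gtgt N) st).

Fixpoint reduced_stack (c : 'I_N) (st : seq gen) : bool :=
  match st with
  | [::] => true
  | h :: t => [&& is_gen h, gsrc h == stack_tgt c t,
                 (if t is h' :: _ then gkind h != gkind h' else true) & reduced_stack c t]
  end.

Fixpoint composable (c : 'I_N) (w : seq gen) : bool :=
  match w with
  | [::] => true
  | g :: t => [&& gsrc g == c, is_gen g & composable (gtgt g) t]
  end.

Definition flip_gen (g : gen) : gen := (gtgt g, gsrc g, gkind g).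

Lemma red_from_cat c pk u v :
  red_from c pk (u ++ v) = red_from c pk u &&
    red_from (last c (map (@gtgt N) u)) (last pk (map (fun g => Some (gkind g)) u)) v.
Proof. by elim: u c pk => [|g u IH] c pk //=; rewrite IH !andbA. Qed.

Lemma red_from_take c pk (w : seq gen) m : red_from c pk w -> red_from c pk (take m w).
Proof. by rewrite -{1}(cat_take_drop m w) red_from_cat => /andP []. Qed.

Lemma red_from_composable c pk w : red_from c pk w -> composable c w.
Proof. by elim: w c pk => [|g w IH] c pk //= /and4P [-> -> _ /IH]. Qed.

Lemma stack_tgt_rev c w : stack_tgt c (rev w) = last c (map (@gtgt N) w).
Proof. by case/lastP: w => [|w g] //; rewrite rev_rcons map_rcons last_rcons. Qed.

Lemma reduced_stack_rev c w : reduced_stack c (rev w) = red_from c None w.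
Proof.
elim/last_ind: w => [|w g IH] //.
rewrite rev_rcons -cats1 red_from_cat /= -IH stack_tgt_rev andbT.
case/lastP: w IH => [|w h] IH /=; first by rewrite !andbT andbC.
rewrite rev_rcons !map_rcons !last_rcons /=.
by case: (reduced_stack c _); case: (is_gen g); case: (gsrc g == _); rewrite /= ?andbF // andbC.
Qed.

Lemma reduced_stack_composable c st : reduced_stack c st -> composable c (rev st).
Proof.
by rewrite -[st in reduced_stack _ st]revK reduced_stack_rev; apply: red_from_composable.
Qed.

Lemma push_reduced c st g : reduced_stack c st -> gsrc g = stack_tgt c st -> is_gen g ->
  reduced_stack c (push st g) /\ stack_tgt c (push st g) = gtgt g.
Proof.
case: st => [|h t] /=; first by move=> _ -> ->; rewrite eqxx.
case/and4P=> gen_h src_h kind_h red_t src_g gen_g.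
case: ifP => kind_hg; last by rewrite /= gen_g src_g eqxx eq_sym kind_hg gen_h src_h kind_h red_t.
case: ifP => [/eqP src_tgt|ne_src]; first by rewrite -(eqP src_h) src_tgt.
rewrite /= /is_gen /= ne_src src_h red_t /= andbT; split=> //.
move: kind_h; case: t {src_h red_t src_g} => // h' t'; rewrite /gkind /= => ?.
by move: kind_hg; rewrite /gkind => /eqP <-.
Qed.

Lemma push_cons c st g : reduced_stack c (g :: st) -> push st g = g :: st.
Proof. by case: st => [|h t] //= /and4P [_ _ kind_g _]; rewrite eq_sym (negbTE kind_g). Qed.

Lemma foldl_push_composable c st w : reduced_stack c st -> composable (stack_tgt c st) w ->
  reduced_stack c (foldl push st w) /\
  stack_tgt c (foldl push st w) = last (stack_tgt c st) (map (@gtgt N) w).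
Proof.
elim: w st => [|g w IH] st //= red_st /and3P [/eqP src_g gen_g comp_w].
have [red_st' tgt_st'] := push_reduced red_st src_g gen_g.
by rewrite -tgt_st'; apply: IH; rewrite ?tgt_st'.
Qed.

Lemma foldl_push_flip (u st : seq gen) : foldl push (map flip_gen u ++ st) u = st.
Proof. by elim: u st => [|g u IH] st //=; rewrite eqxx /= eqxx IH. Qed.

Lemma foldl_push_red_from c pk (w st : seq gen) :
  red_from c pk w -> pk = (if st is h :: _ then Some (gkind h) else None) ->
  foldl push st w = rev w ++ st.
Proof.
elim: w c pk st => [|g w IH] c pk st //= /and4P [_ _ kind_g red_w] pk_st.
have -> : push st g = g :: st.
  by case: st pk_st => [|h t] //= pk_st; subst pk; rewrite eq_sym (negbTE kind_g).
by rewrite (IH _ _ _ red_w) // rev_cons cat_rcons.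
Qed.

Lemma push_merge c st h g : reduced_stack c st -> stack_tgt c st = gsrc h ->
  is_gen h -> is_gen g -> gtgt h = gsrc g -> gkind h = gkind g ->
  push (push st h) g = if gsrc h == gtgt g then st else push st (gsrc h, gtgt g, gkind g).
Proof.
case: h g => [[a b] k] [[b' d] k']; rewrite /is_gen /gsrc /gtgt /gkind /=.
move=> + + ab bd Eb Ek; subst b' k'.
case: st => [|[[x y] kz] r] /= => [_ _|/and4P [xy _ kr _] /= Ey]; first by rewrite eqxx; case: ifP.
rewrite /is_gen /stack_tgt /gkind /gsrc /gtgt /= in xy Ey *; subst y.
case: (eqVneq kz k) => [Ek|kzk] /=; last by rewrite eqxx; case: ifP.
subst kz; case: (eqVneq x b) => [Ex|xb] /=; last first.
  by rewrite eqxx; case: (eqVneq a d) => // <-; rewrite (negPf xy).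
subst x; rewrite (negPf bd).
have -> : push r (b, d, k) = (b, d, k) :: r.
  by case: r kr => [|[[u v] ku] r] //=; rewrite /gkind /= eq_sym => /negPf ->.
by case: eqP => // ->.
Qed.

Section Associativity.
Variables (b c : 'I_N) (X : seq gen).
Hypotheses (red_X : reduced_stack b X) (tgt_X : stack_tgt b X = c).

Lemma foldl_push_rev_reduced S : reduced_stack c S ->
  reduced_stack b (foldl push X (rev S)) /\ stack_tgt b (foldl push X (rev S)) = stack_tgt c S.
Proof.
move=> red_S; have comp_S : composable (stack_tgt b X) (rev S).
  by rewrite tgt_X; apply: reduced_stack_composable.
by have [-> ->] := foldl_push_composable red_X comp_S; rewrite tgt_X -stack_tgt_rev revK.
Qed.

Lemma foldl_push_push S g : reduced_stack c S -> gsrc g = stack_tgt c S -> is_gen g ->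
  foldl push X (rev (push S g)) = push (foldl push X (rev S)) g.
Proof.
case: S => [|h t] //= /and4P [gen_h /eqP src_h _ red_t] src_g gen_g.
have [red_Xt tgt_Xt] := foldl_push_rev_reduced red_t.
case: ifP => [/eqP kind_hg|_]; last by rewrite rev_cons foldl_rcons.
rewrite rev_cons foldl_rcons (push_merge red_Xt _ gen_h gen_g) ?tgt_Xt //.
by case: ifP => _ //; rewrite rev_cons foldl_rcons.
Qed.

Lemma foldl_push_assoc S W : reduced_stack c S -> composable (stack_tgt c S) W ->
  foldl push X (rev (foldl push S W)) = foldl push X (rev S ++ W).
Proof.
elim: W S => [|g W IH] S red_S /=; first by rewrite cats0.
case/and3P=> /eqP src_g gen_g comp_W.
have [red_S' tgt_S'] := push_reduced red_S src_g gen_g.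
rewrite IH ?tgt_S' //.
by rewrite foldl_cat foldl_push_push // -cat_rcons foldl_cat foldl_rcons.
Qed.

End Associativity.

Lemma push_suffix s st g : ~~ suffix s st -> suffix s (push st g) -> push st g = s.
Proof.
move=> not_st; have suffix_cons' u y : suffix s u -> suffix s (y :: u).
  by move=> su; rewrite suffix_consE su orbT.
case: st not_st => [|h t] /= not_st; first by rewrite suffix_consE (negPf not_st) orbF => /eqP.
case: ifP => _; last by rewrite suffix_consE (negPf not_st) orbF => /eqP.
case: ifP => _; first by move/(suffix_cons' _ h); rewrite (negPf not_st).
by rewrite suffix_consE => /orP [/eqP //|/(suffix_cons' _ h)]; rewrite (negPf not_st).
Qed.

Local Notation arrow := (arrow N).

Lemma flip_genK : involutive flip_gen.
Proof. by case=> [[a b] k]. Qed.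

Lemma atgt_stack (x : arrow) : atgt x = stack_tgt x.1 (rev x.2).
Proof. by rewrite stack_tgt_rev. Qed.

Lemma is_arrow_stack (x : arrow) : is_arrow x = reduced_stack x.1 (rev x.2).
Proof. by rewrite reduced_stack_rev. Qed.

Lemma is_arrow_rcons_inv (s : 'I_N) u h : is_arrow (s, rcons u h) -> is_arrow (s, u).
Proof. by move/(red_from_take (size u)); rewrite -cats1 take_size_cat. Qed.

Lemma flip_reduced c pk w : red_from c pk w ->
  reduced_stack (last c (map (@gtgt N) w)) (map flip_gen w) /\
  stack_tgt (last c (map (@gtgt N) w)) (map flip_gen w) = c.
Proof.
elim: w c pk => [|g w IH] c pk //= /and4P [/eqP src_g gen_g _ red_w].
have [red_w' tgt_w'] := IH _ _ red_w; rewrite red_w' tgt_w' eqxx andbT.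
have -> : is_gen (flip_gen g) by rewrite /is_gen eq_sym.
split=> //; case: w red_w {IH red_w' tgt_w'} => // g' w' /= /and4P [_ _ + _].
by rewrite /gkind eq_sym.
Qed.

Lemma atgt_ainv (x : arrow) : is_arrow x -> atgt (ainv x) = asrc x.
Proof. by move=> arr_x; rewrite atgt_stack /= revK; have [] := flip_reduced arr_x. Qed.

(* The reduced word of [x^-1 y], as a stack; the stack of [x^-1] is [map flip_gen x.2]. *)
Definition ldiv (x y : arrow) : seq gen := foldl push (map flip_gen x.2) y.2.

Lemma acomp_ainvE (x y : arrow) : is_arrow x -> asrc y = asrc x ->
  acomp (ainv x) y = (atgt x, rev (ldiv x y)).
Proof. by move=> arr_x src_y; rewrite /acomp atgt_ainv // src_y eqxx /= revK. Qed.

Lemma ldiv_self (x : arrow) : ldiv x x = [::].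
Proof. by have := foldl_push_flip x.2 [::]; rewrite cats0. Qed.

Lemma ldiv_reduced (x y : arrow) : is_arrow x -> is_arrow y -> asrc y = asrc x ->
  reduced_stack (atgt x) (ldiv x y) /\ stack_tgt (atgt x) (ldiv x y) = atgt y.
Proof.
move=> arr_x arr_y src_y; have [red_x' tgt_x'] := flip_reduced arr_x.
have comp_y : composable (asrc y) y.2 := red_from_composable arr_y.
rewrite src_y -[asrc x]tgt_x' in comp_y; have [-> ->] := foldl_push_composable red_x' comp_y.
by rewrite tgt_x' /atgt -[x.1]/(asrc x) -src_y.
Qed.

Lemma ldiv_unique (a b : arrow) S : is_arrow a -> reduced_stack (atgt a) S ->
  foldl push (rev a.2) (rev S) = rev b.2 -> ldiv a b = S.
Proof.
move=> arr_a red_S def_b; have [red_a' tgt_a'] := flip_reduced arr_a.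
rewrite /ldiv -[b.2]revK -def_b (foldl_push_assoc red_a' tgt_a').
- rewrite revK foldl_cat; have := ldiv_self a; rewrite /ldiv => ->.
  rewrite (foldl_push_red_from (c := atgt a) (pk := None)) ?cats0 ?revK //.
  by rewrite -reduced_stack_rev revK.
- by rewrite -is_arrow_stack.
- by rewrite -atgt_stack; apply: reduced_stack_composable.
Qed.

Lemma foldl_push_ldiv (x y : arrow) : is_arrow x -> is_arrow y -> asrc y = asrc x ->
  foldl push (rev x.2) (rev (ldiv x y)) = rev y.2.
Proof.
move=> arr_x arr_y src_y; have [red_x' tgt_x'] := flip_reduced arr_x.
rewrite /ldiv (foldl_push_assoc (b := x.1) (c := atgt x)) -?atgt_stack -?is_arrow_stack //.
- rewrite foldl_cat; have := foldl_push_flip (rev (map flip_gen x.2)) [::].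
  rewrite cats0 map_rev (mapK flip_genK) => ->.
  by rewrite (foldl_push_red_from (c := y.1) (pk := None)) ?cats0.
- by rewrite tgt_x' -[x.1]/(asrc x) -src_y; apply: red_from_composable arr_y.
Qed.

Lemma ldiv_inj (x a b : arrow) : is_arrow x -> is_arrow a -> is_arrow b ->
  asrc a = asrc x -> asrc b = asrc x -> ldiv x a = ldiv x b -> a = b.
Proof.
move=> arr_x arr_a arr_b src_a src_b eq_ab.
have := foldl_push_ldiv arr_x arr_a src_a; rewrite eq_ab foldl_push_ldiv // => /(congr1 rev).
by rewrite !revK; case: a b src_a src_b {arr_a arr_b eq_ab} => [a1 a2] [b1 b2] /= -> -> ->.
Qed.

Lemma ldiv_gen (a b : arrow) g : is_arrow a -> is_arrow b -> asrc b = asrc a ->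
  ldiv a b = [:: g] <-> [/\ is_gen g, gsrc g = atgt a & rev b.2 = push (rev a.2) g].
Proof.
move=> arr_a arr_b src_b; split=> [def_ab|[gen_g src_g def_b]].
  have [/= red_g _] := ldiv_reduced arr_a arr_b src_b; rewrite def_ab /= andbT in red_g.
  case/andP: red_g => gen_g /eqP src_g; split=> //.
  by rewrite -(foldl_push_ldiv arr_a arr_b src_b) def_ab.
by apply: ldiv_unique => //=; rewrite gen_g src_g eqxx.
Qed.

Lemma is_arrow_acomp_ainv (x a : arrow) : is_arrow x -> is_arrow a -> asrc a = asrc x ->
  [/\ is_arrow (acomp (ainv x) a), asrc (acomp (ainv x) a) = atgt x
    & atgt (acomp (ainv x) a) = atgt a].
Proof.
move=> arr_x arr_a src_a; have [red_xa tgt_xa] := ldiv_reduced arr_x arr_a src_a.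
by rewrite acomp_ainvE // is_arrow_stack /= revK; split; rewrite // atgt_stack /= revK.
Qed.

Lemma ldiv_acomp_ainv (x a b : arrow) : is_arrow x -> is_arrow a -> is_arrow b ->
  asrc a = asrc x -> asrc b = asrc x ->
  ldiv (acomp (ainv x) a) (acomp (ainv x) b) = ldiv a b.
Proof.
move=> arr_x arr_a arr_b src_a src_b.
have [arr_xa _ tgt_xa] := is_arrow_acomp_ainv arr_x arr_a src_a.
have [red_ab _] := ldiv_reduced arr_a arr_b (etrans src_b (esym src_a)).
apply: ldiv_unique; rewrite ?tgt_xa // !acomp_ainvE //= !revK.
have [red_x' tgt_x'] := flip_reduced arr_x.
rewrite [ldiv x a]/ldiv [ldiv x b]/ldiv -foldl_cat -{1}[a.2]revK.
have red_a : reduced_stack x.1 (rev a.2) by rewrite -[x.1]/(asrc x) -src_a -is_arrow_stack.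
rewrite -(foldl_push_assoc red_x' tgt_x' red_a).
- by rewrite (foldl_push_ldiv arr_a arr_b) ?revK // src_a.
- by rewrite -[x.1]/(asrc x) -src_a -atgt_stack; apply: reduced_stack_composable.
Qed.

Lemma ldiv_push (x a b : arrow) g : is_arrow x -> is_arrow a -> is_arrow b ->
  asrc a = asrc x -> asrc b = asrc x -> ldiv a b = [:: g] -> ldiv x b = push (ldiv x a) g.
Proof.
move=> arr_x arr_a arr_b src_a src_b.
have [arr_xa src_xa _] := is_arrow_acomp_ainv arr_x arr_a src_a.
have [arr_xb src_xb _] := is_arrow_acomp_ainv arr_x arr_b src_b.
rewrite -(ldiv_acomp_ainv arr_x arr_a arr_b) // ldiv_gen ?src_xa ?src_xb //.
by case=> _ _; rewrite !acomp_ainvE //= !revK.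
Qed.

Lemma ldiv_acomp (x : arrow) w : is_arrow x -> red_from (atgt x) None w ->
  [/\ is_arrow (acomp x (atgt x, w)), asrc (acomp x (atgt x, w)) = asrc x
    & ldiv x (acomp x (atgt x, w)) = rev w].
Proof.
move=> arr_x red_w; rewrite /acomp eqxx /=.
have red_x : reduced_stack x.1 (rev x.2) by rewrite -is_arrow_stack.
have comp_w : composable (stack_tgt x.1 (rev x.2)) w.
  by rewrite -atgt_stack; apply: red_from_composable red_w.
have [red_xw _] := foldl_push_composable red_x comp_w.
split; rewrite ?is_arrow_stack /= ?revK //.
by apply: ldiv_unique; rewrite //= ?revK ?reduced_stack_rev.
Qed.

Lemma acomp_gen_arrow (y : arrow) g : gsrc g = atgt y ->
  acomp y (gen_arrow g) = (y.1, rev (push (rev y.2) g)).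
Proof. by move=> src_g; rewrite /acomp /asrc /= src_g eqxx. Qed.

Lemma ldiv_acomp_gen_arrow (y : arrow) g : is_arrow y -> gsrc g = atgt y -> is_gen g ->
  [/\ is_arrow (acomp y (gen_arrow g)), asrc (acomp y (gen_arrow g)) = asrc y
    & ldiv y (acomp y (gen_arrow g)) = [:: g]].
Proof.
move=> arr_y src_g gen_g; rewrite acomp_gen_arrow //.
have red_y : reduced_stack y.1 (rev y.2) by rewrite -is_arrow_stack.
have [red_yg _] := push_reduced red_y (etrans src_g (atgt_stack y)) gen_g.
have arr_yg : is_arrow (y.1, rev (push (rev y.2) g)) by rewrite is_arrow_stack revK.
by split=> //; apply/ldiv_gen => //=; rewrite revK.
Qed.

End Words.

Section Chain.
Variables (N : nat) (R : realFieldType) (p : gen N -> R).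
Local Notation arrow := (arrow N).
Local Notation trans := (trans p).

Lemma transE (x y : arrow) : is_arrow x ->
  trans x y = if asrc x == asrc y then (if ldiv x y is [:: g] then p g else 0%R) else 0%R.
Proof.
move=> arr_x; rewrite /trans; case: eqP => // src_y; rewrite acomp_ainvE //=.
by case: (ldiv x y) => [|g [|h s]] //; rewrite !rev_cons; case: (rev s) => [|? []].
Qed.

Lemma trans_src (a b : arrow) : (0 < trans a b)%R -> asrc a = asrc b.
Proof. by rewrite /trans; case: eqP => // _; rewrite ltxx. Qed.

Lemma trans_gt0 (a b : arrow) : is_arrow a -> (0 < trans a b)%R ->
  asrc b = asrc a /\ exists g, ldiv a b = [:: g].
Proof.
move=> arr_a pos_ab; split; first by rewrite (trans_src pos_ab).
move: pos_ab; rewrite transE //; case: ifP; case: (ldiv a b) => [|g [|]]; rewrite ?ltxx //.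
by exists g.
Qed.

Lemma mem_step_cands (y z : arrow) : is_arrow y -> z \in step_cands y ->
  is_arrow z /\ asrc z = asrc y.
Proof.
move=> arr_y /mapP [g]; rewrite mem_filter => /andP [/andP [/eqP src_g gen_g] _] ->.
by have [] := ldiv_acomp_gen_arrow arr_y src_g gen_g.
Qed.

Lemma cand_paths_shape n (y : arrow) (ys : seq arrow) : is_arrow y -> ys \in cand_paths n y ->
  ys = y :: behead ys /\ all (fun z => is_arrow z && (asrc z == asrc y)) ys.
Proof.
elim: n y ys => [|n IH] y ys arr_y /=; first by rewrite inE => /eqP -> /=; rewrite arr_y eqxx.
case/flatten_mapP => z z_y /mapP [zs zs_z ->] /=; split=> //.
have [arr_z src_z] := mem_step_cands arr_y z_y.
have [_ /allP over_zs] := IH _ zs arr_z zs_z; rewrite arr_y eqxx /=.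
by apply/allP => w /over_zs /andP [-> /eqP ->]; rewrite src_z eqxx.
Qed.

Section Translation.
Variable x : arrow.
Hypothesis arr_x : is_arrow x.
Local Notation over_x := (fun z : arrow => is_arrow z && (asrc z == asrc x)).

Lemma trans_acomp_ainv a b : is_arrow a -> is_arrow b -> asrc a = asrc x -> asrc b = asrc x ->
  trans (acomp (ainv x) a) (acomp (ainv x) b) = trans a b.
Proof.
move=> arr_a arr_b src_a src_b.
have [arr_xa src_xa _] := is_arrow_acomp_ainv arr_x arr_a src_a.
have [_ src_xb _] := is_arrow_acomp_ainv arr_x arr_b src_b.
by rewrite !transE // src_xa src_xb src_a src_b !eqxx ldiv_acomp_ainv.
Qed.

Lemma step_cands_acomp_ainv y : is_arrow y -> asrc y = asrc x ->
  step_cands (acomp (ainv x) y) = map (acomp (ainv x)) (step_cands y).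
Proof.
move=> arr_y src_y; have [arr_xy src_xy tgt_xy] := is_arrow_acomp_ainv arr_x arr_y src_y.
rewrite /step_cands tgt_xy -map_comp; apply/eq_in_map => g.
rewrite mem_filter => /andP [/andP [/eqP src_g gen_g] _] /=.
have [arr_yg src_yg ldiv_yg] := ldiv_acomp_gen_arrow arr_y src_g gen_g.
rewrite acomp_gen_arrow ?tgt_xy // !acomp_ainvE ?src_yg //= revK.
by rewrite (ldiv_push arr_x arr_y arr_yg _ _ ldiv_yg) // src_yg.
Qed.

Lemma acomp_ainv_inj : {in over_x &, injective (acomp (ainv x))}.
Proof.
move=> a b /andP [arr_a /eqP src_a] /andP [arr_b /eqP src_b].
by rewrite !acomp_ainvE // => -[/(congr1 rev)]; rewrite !revK; apply: ldiv_inj.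
Qed.

Lemma cand_paths_acomp_ainv n y : is_arrow y -> asrc y = asrc x ->
  cand_paths n (acomp (ainv x) y) = map (map (acomp (ainv x))) (cand_paths n y).
Proof.
elim: n y => [|n IH] y arr_y src_y //; simpl cand_paths.
rewrite step_cands_acomp_ainv // map_flatten -[in LHS]map_comp -[in RHS]map_comp.
congr flatten.
apply/eq_in_map => z z_y /=; have [arr_z src_z] := mem_step_cands arr_y z_y.
by rewrite IH ?src_z // -!map_comp.
Qed.

Lemma weight_acomp_ainv y ys : all over_x (y :: ys) ->
  weight p (acomp (ainv x) y) (map (acomp (ainv x)) ys) = weight p y ys.
Proof.
elim: ys y => [|z ys IH] y //= /and3P [/andP [arr_y /eqP src_y] /andP [arr_z /eqP src_z] over_ys].
by rewrite trans_acomp_ainv // IH //= arr_z src_z eqxx.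
Qed.

Lemma prob_fdd_acomp_ainv n (B : pred (seq arrow)) :
  prob_fdd p n x (fun ys => B (map (acomp (ainv x)) ys)) = prob_fdd p n (unit_arrow (atgt x)) B.
Proof.
have over_cand ys : ys \in cand_paths n x -> all over_x ys.
  by case/(cand_paths_shape arr_x).
have -> : unit_arrow (atgt x) = acomp (ainv x) x by rewrite acomp_ainvE // ldiv_self.
rewrite /prob_fdd cand_paths_acomp_ainv // undup_map_in; last first.
  by move=> u v /over_cand u_x /over_cand v_x; apply: (inj_in_map acomp_ainv_inj).
rewrite big_map [LHS]big_seq_cond [RHS]big_seq_cond; apply: eq_bigr => ys.
case/andP; rewrite mem_undup => /(cand_paths_shape arr_x) [-> over_ys] _ /=.
by rewrite weight_acomp_ainv.
Qed.

End Translation.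

Lemma pos_path_src (x : arrow) t : pos_path p (x :: t) ->
  all (fun z => is_arrow z && (asrc z == asrc x)) (x :: t).
Proof.
case/andP=> /= /andP [arr_x arr_t]; rewrite arr_x eqxx /=.
elim: t x arr_t {arr_x} => [|y t IH] x //= /andP [arr_y arr_t] /andP [pos_xy path_t].
by have := IH y arr_t path_t; rewrite -(trans_src pos_xy) arr_y eqxx => ->.
Qed.

Section Reachability.
Hypothesis p_gt0 : forall g, is_gen g -> (0 < p g)%R.

Definition reachable (x y : arrow) : Prop := exists t, pos_path p (x :: t) /\ last x t = y.

Lemma reachable_refl x : is_arrow x -> reachable x x.
Proof. by move=> arr_x; exists [::]; rewrite /pos_path /= arr_x. Qed.

Lemma reachable_step x y : is_arrow x -> is_arrow y -> (0 < trans x y)%R -> reachable x y.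
Proof. by move=> arr_x arr_y pos_xy; exists [:: y]; rewrite /pos_path /= arr_x arr_y pos_xy. Qed.

Lemma reachable_trans x y z : reachable x y -> reachable y z -> reachable x z.
Proof.
case=> [t1 [/andP [arr_t1 path_t1] <-]] [t2 [/andP [/= /andP [_ arr_t2] path_t2] <-]].
exists (t1 ++ t2); split; last exact: last_cat.
by rewrite /pos_path -cat_cons all_cat arr_t1 arr_t2 cat_path path_t1.
Qed.

Lemma trans_rcons_gt0 (s : 'I_N) u h : is_arrow (s, rcons u h) ->
  (0 < trans (s, u) (s, rcons u h))%R /\ (0 < trans (s, rcons u h) (s, u))%R.
Proof.
move=> arr_uh; have arr_u := is_arrow_rcons_inv arr_uh.
have red_uh : reduced_stack s (h :: rev u).
  by rewrite -rev_rcons -[s]/((s, rcons u h).1) -is_arrow_stack.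
case/and4P: (red_uh) => gen_h /eqP src_h _ _.
have ldiv_up : ldiv (s, u) (s, rcons u h) = [:: h].
  apply/ldiv_gen => //; split; rewrite ?atgt_stack //=.
  by rewrite rev_rcons (push_cons red_uh).
have ldiv_down : ldiv (s, rcons u h) (s, u) = [:: flip_gen h].
  apply/ldiv_gen => //; split.
  - by rewrite /is_gen eq_sym.
  - by rewrite /atgt /= map_rcons last_rcons.
  - by rewrite rev_rcons /= /flip_gen !eqxx.
rewrite !transE // eqxx ldiv_up ldiv_down.
by split; apply: p_gt0; rewrite // /is_gen eq_sym.
Qed.

Lemma reachable_unit (s : 'I_N) w : is_arrow (s, w) ->
  reachable (s, [::]) (s, w) /\ reachable (s, w) (s, [::]).
Proof.
elim/last_ind: w => [|u h IH] arr_uh; first by split; apply: reachable_refl.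
have arr_u := is_arrow_rcons_inv arr_uh.
have [up down] := IH arr_u; have [pos_up pos_down] := trans_rcons_gt0 arr_uh.
split; first exact: reachable_trans up (reachable_step arr_u arr_uh pos_up).
exact: reachable_trans (reachable_step arr_uh arr_u pos_down) down.
Qed.

Lemma reachableP x y : is_arrow x -> is_arrow y -> reachable x y <-> asrc x = asrc y.
Proof.
move=> arr_x arr_y; split=> [[t [/pos_path_src /allP over_t <-]]|].
  by have /andP [_ /eqP] := over_t _ (mem_last x t).
case: x y arr_x arr_y => [s w] [s' w'] arr_x arr_y /= src_eq; subst s'.
exact: reachable_trans (reachable_unit arr_x).2 (reachable_unit arr_y).1.
Qed.

End Reachability.

Section Walk.
Variables (w1 : arrow) (t : seq arrow).
Hypothesis pos_w : pos_path p (w1 :: t).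
Local Notation vs := (w1 :: t).
Local Notation w2 := (last w1 t).
Local Notation gs := (rev (ldiv w1 w2)).
Local Notation over_w1 := (fun z : arrow => is_arrow z && (asrc z == asrc w1)).
Local Notation prefix_arrow m := (acomp w1 (atgt w1, take m gs)).

Let over_vs : all over_w1 vs := pos_path_src pos_w.
Let arr_w1 : is_arrow w1. Proof. by case/andP: pos_w => /andP []. Qed.
Let over_w2 : over_w1 w2. Proof. exact: allP over_vs _ (mem_last w1 t). Qed.

Lemma ldiv_prefix_arrow m :
  [/\ is_arrow (prefix_arrow m), asrc (prefix_arrow m) = asrc w1
    & ldiv w1 (prefix_arrow m) = rev (take m gs)].
Proof.
case/andP: over_w2 => arr_w2 /eqP src_w2; apply: ldiv_acomp => //; apply: red_from_take.
by have [] := ldiv_reduced arr_w1 arr_w2 src_w2; rewrite -reduced_stack_rev revK.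
Qed.

Lemma prefix_subtree_entry m : {in over_w1 &, forall a b, (0 < trans a b)%R ->
  ~~ suffix (rev (take m gs)) (ldiv w1 a) -> suffix (rev (take m gs)) (ldiv w1 b) ->
  b = prefix_arrow m}.
Proof.
move=> a b /andP [arr_a /eqP src_a] /andP [arr_b /eqP src_b] /(trans_gt0 arr_a) [_ [g ab]].
rewrite (ldiv_push arr_w1 arr_a arr_b src_a src_b ab) => out_a /(push_suffix out_a).
have [arr_m src_m <-] := ldiv_prefix_arrow m.
rewrite -(ldiv_push arr_w1 arr_a arr_b src_a src_b ab).
exact: ldiv_inj.
Qed.

Lemma mem_drop_prefix_arrow m : m < size gs -> prefix_arrow m \in vs ->
  prefix_arrow m.+1 \in drop (last_pos (prefix_arrow m) vs) vs.
Proof.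
move=> lt_m /(last_posP w1) [/andP [pos_gt0 pos_le] nth_m].
move: (last_pos _ vs) pos_gt0 pos_le nth_m => [//|i] _; rewrite ltnS /= => le_i nth_m.
have [path_i last_i] := path_drop le_i (proj2 (andP pos_w)).
apply: (path_entry_mem (prefix_subtree_entry (m := m.+1))) path_i _ _.
- by rewrite -drop_nth ?ltnS //; apply/allP => z /mem_drop; apply: (allP over_vs).
- rewrite nth_m; have [_ _ ->] := ldiv_prefix_arrow m; rewrite suffix_rev.
  by apply/negP => /size_prefix; rewrite !size_takel ?ltnn // ltnW.
- by rewrite last_i suffix_revLR prefix_take.
Qed.

Lemma mem_prefix_arrow m : m <= size gs -> prefix_arrow m \in vs.
Proof.
elim: m => [_|m IH lt_m]; first by rewrite /acomp eqxx take0 /= revK -surjective_pairing mem_head.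
exact: mem_drop (mem_drop_prefix_arrow lt_m (IH (ltnW lt_m))).
Qed.

Lemma last_pos_prefix_arrow m : m < size gs ->
  last_pos (prefix_arrow m) vs < last_pos (prefix_arrow m.+1) vs.
Proof. by move=> lt_m; apply/last_pos_drop/mem_drop_prefix_arrow/mem_prefix_arrow/ltnW. Qed.

Lemma prefix_arrow_times : w1 <> w2 ->
  1 <= size gs /\ exists ns : seq nat,
    [/\ size ns = (size gs).-1, path ltn 1 (rcons ns (size vs))
       & forall m, m < (size gs).-1 -> nth w1 vs (nth 0 ns m).-1 = prefix_arrow m.+1].
Proof.
move=> neq_w; have gs_gt0 : 0 < size gs.
  case/andP: over_w2 => arr_w2 /eqP src_w2; rewrite size_rev lt0n size_eq0 -(ldiv_self w1).
  by apply/eqP => /esym /(ldiv_inj arr_w1 arr_w1 arr_w2 erefl src_w2).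
pose n_ m := last_pos (prefix_arrow m) vs.
have n_P m : m <= size gs -> 0 < n_ m <= size vs /\ nth w1 vs (n_ m).-1 = prefix_arrow m.
  by move/mem_prefix_arrow; apply: last_posP.
split=> //; exists (map n_ (iota 1 (size gs).-1)); split.
- by rewrite size_map size_iota.
- apply: path_ltn_map_iota; rewrite ?add0n ?prednK //.
  + by have [/andP []] := n_P 0 isT.
  + by have [/andP []] := n_P _ (leqnn (size gs)).
  + by move=> j /andP [_ le_j]; apply: last_pos_prefix_arrow; lia.
- move=> m lt_m; rewrite (nth_map 0) ?size_iota // nth_iota // add1n.
  by have [] := n_P m.+1; first lia.
Qed.

End Walk.

End Chain.

Local Open Scope ring_scope.

Theorem lemma2p2 (N : nat) (hN : (3 <= N)%N) (R : realFieldType)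
  (p : gen N -> R)
  (hp : forall g : gen N, is_gen g -> 0 < p g < 1)
  (hsum : forall i : 'I_N,
      \sum_(g : gen N | (gsrc g == i) && is_gen g) p g = 1) :
  (* (i) *)
  (forall x : arrow N, is_arrow x ->
     forall (n : nat) (B : pred (seq (arrow N))),
       prob_fdd p n x (fun ys => B (map (acomp (ainv x)) ys))
       = prob_fdd p n (unit_arrow (atgt x)) B)
  /\
  (* (ii) *)
  (forall w1 w2 : arrow N, is_arrow w1 -> is_arrow w2 -> w1 <> w2 ->
     (exists t : seq (arrow N), pos_path p (w1 :: t) /\ last w1 t = w2)
     <-> (exists i : 'I_N, asrc w1 = i /\ asrc w2 = i))
  /\
  (* (iii) : v = w1 :: t is v_1, ..., v_{n'}; v_n = nth w1 v n.-1 *)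
  (forall (w1 w2 : arrow N) (t : seq (arrow N)),
     w1 <> w2 -> pos_path p (w1 :: t) -> last w1 t = w2 ->
     let gs := (acomp (ainv w1) w2).2 in
     let d := size gs in
     (1 <= d)%N /\
     exists ns : seq nat,
       size ns = d.-1 /\
       path ltn 1%N (rcons ns (size (w1 :: t))) /\
       forall m : nat, (m < d.-1)%N ->
         nth w1 (w1 :: t) (nth 0%N ns m).-1
         = acomp w1 (atgt w1, take m.+1 gs)).
Proof.
have p_gt0 g : is_gen g -> 0 < p g by case/hp/andP.
split; first by move=> x arr_x n B; apply: prob_fdd_acomp_ainv.
split.
  move=> w1 w2 arr_w1 arr_w2 _; rewrite -/(reachable p w1 w2) (reachableP p_gt0) //.
  by split=> [->|[i [-> ->]]]; first exists (asrc w2).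
move=> w1 w2 t neq_w pos_w def_w2 gs d; subst w2; rewrite {}/d {}/gs.
have /allP over_w := pos_path_src pos_w.
have /andP [arr_w1 _] := over_w _ (mem_head w1 t).
have /andP [_ /eqP src_w2] := over_w _ (mem_last w1 t).
rewrite acomp_ainvE //; have [-> [ns [size_ns path_ns nth_ns]]] := prefix_arrow_times pos_w neq_w.
by split=> //; exists ns.
Qed.
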